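(* Let $r\ge1$, $n$ be integers and let $\sigma:\mathbb{Z}_n\to\{0,1\}$ be a temporally periodic configuration. Then either every block $[i,j]\in B(\sigma)$ has length $|[i,j]|\le r$, or every block $[i,j]\in B(\sigma)$ has length $|[i,j]|>r$.
   Context: Cells are elements of $\mathbb{Z}_n$, arithmetic mod $n$; $[a,b]$ denotes the cyclic interval $a,a+1,\dots,b$ and $|[a,b]|$ its number of cells. The majority rule with radius $r$: $\mathrm{maj}_r(\sigma)(i)=0$ if among the cells of $[i-r,i+r]$ strictly more have value $0$ than value $1$ under $\sigma$, and $=1$ otherwise. $\sigma$ is temporally periodic if $\mathrm{maj}_r(\mathrm{maj}_r(\sigma))=\sigma$. For $\beta\in\{0,1\}$, $B^\beta(\sigma)$ is the set of maximal homogeneous blocks with value $\beta$: cell intervals $[i,j]$ with $\sigma(k)=\beta$ for all $k\in[i,j]$ and $\sigma(i-1)=\sigma(j+1)=1-\beta$; $B(\sigma)=B^0(\sigma)\cup B^1(\sigma)$. *)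

From mathcomp Require Import all_boot.
Set Implicit Arguments. Unset Strict Implicit. Unset Printing Implicit Defensive.

(* Cells are Z_N with N = n.+1 >= 1, represented as 'I_n.+1; a configuration
   is sigma : 'I_n.+1 -> bool (false = 0, true = 1). *)

Definition cell (n k : nat) : 'I_n.+1 := inord (k %% n.+1).

(* cell i - r + k  (note r * n = -r mod n.+1) *)
Definition wcell (n r : nat) (i : 'I_n.+1) (k : nat) : 'I_n.+1 :=
  cell n (i + r * n + k).

Definition zeros (n r : nat) (s : 'I_n.+1 -> bool) (i : 'I_n.+1) : nat :=
  \sum_(k < (2 * r).+1) (~~ s (wcell r i k)).

Definition ones (n r : nat) (s : 'I_n.+1 -> bool) (i : 'I_n.+1) : nat :=
  \sum_(k < (2 * r).+1) (s (wcell r i k) : nat).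

Definition maj (n r : nat) (s : 'I_n.+1 -> bool) : 'I_n.+1 -> bool :=
  fun i => ~~ (ones r s i < zeros r s i).

Definition temporally_periodic (n r : nat) (s : 'I_n.+1 -> bool) : Prop :=
  forall i, maj r (maj r s) i = s i.

(* |[i,j]| = number of cells of the cyclic interval i, i+1, ..., j *)
Definition ilen (n : nat) (i j : 'I_n.+1) : nat := ((j + n.+1 - i) %% n.+1).+1.

Definition is_block (n : nat) (s : 'I_n.+1 -> bool) (b : bool) (i j : 'I_n.+1) : Prop :=
  (forall k, k < ilen i j -> s (cell n (i + k)) = b) /\
  s (cell n (i + n)) = ~~ b /\ s (cell n (j + 1)) = ~~ b.

From mathcomp Require Import all_boot zify.
From Stdlib Require Import Classical.

Set Implicit Arguments.
Unset Strict Implicit.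
Unset Printing Implicit Defensive.

(* Unroll sigma to a periodic sequence on nat.  Suppose sigma is temporally
   periodic, cells [p, p+r] all have value b and cell p+r+1 does not.  Then none
   of the cells p+r+1, ..., p+2r+1 has value b: otherwise the window of p+r+1
   would hold r+1 copies of b (cells p+1..p+r and that one), so maj sigma would
   be b on [p+1, p+r+1], and maj (maj sigma) = sigma would be b at p+r+1.
   Hence once a run of length > r occurs, such runs tile the rest of the line
   and every later run is long; since the blocks of sigma recur periodically,
   a long block excludes a short one. *)

Definition wcount (g : nat -> bool) (b : bool) (lo len : nat) : nat :=
  count (fun k => g k == b) (iota lo len).

Definition mono_run (g : nat -> bool) (b : bool) (lo len : nat) : Prop :=
  forall k, lo <= k < lo + len -> g k = b.

Lemma wcountD g b lo l1 l2 :
  wcount g b lo (l1 + l2) = wcount g b lo l1 + wcount g b (lo + l1) l2.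
Proof. by rewrite /wcount iotaD count_cat. Qed.

Lemma wcount_sub g b lo len lo' len' :
  lo <= lo' -> lo' + len' <= lo + len -> wcount g b lo' len' <= wcount g b lo len.
Proof.
move=> le_lo le_hi.
have -> : len = lo' - lo + (len' + (lo + len - (lo' + len'))) by lia.
by rewrite !wcountD subnKC //; lia.
Qed.

Lemma wcount_total g lo len : wcount g true lo len + wcount g false lo len = len.
Proof.
rewrite -[RHS](size_iota lo len) -(count_predC g) /wcount.
by congr (_ + _); apply: eq_count => k /=; case: (g k).
Qed.

Lemma wcount_mono_run g b lo len : mono_run g b lo len -> wcount g b lo len = len.
Proof.
move=> run; apply/eqP; rewrite -[X in _ == X](size_iota lo len) -all_count.
by apply/allP => k; rewrite mem_iota => /run ->.
Qed.

Lemma sum_count_iota (P : pred nat) lo len :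
  \sum_(k < len) P (lo + k) = count P (iota lo len).
Proof.
elim: len => [|len IH]; first by rewrite big_ord0.
by rewrite big_ord_recr IH -[in RHS]addn1 iotaD count_cat /= addn0.
Qed.

(* Only cells [x >= r] are constrained, so that the window [x - r, x + r] does
   not underflow. *)
Definition maj_image (r : nat) (g h : nat -> bool) : Prop :=
  forall x b, r <= x -> r < wcount g b (x - r) (2 * r).+1 -> h x = b.

Lemma maj_image_run r g h b x y :
  maj_image r g h -> r <= x -> x - r <= y <= x -> mono_run g b y r.+1 -> h x = b.
Proof.
move=> gh rx /andP[le_y ge_y] run; apply: gh => //.
rewrite -[X in X <= _](wcount_mono_run run).
by apply: wcount_sub; lia.
Qed.

Section TwoCycle.

Variables (r : nat) (g h : nat -> bool).
Hypotheses (gh : maj_image r g h) (hg : maj_image r h g).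

Lemma run_flip b p : r <= p -> mono_run g b p r.+1 -> g (p + r.+1) != b ->
  mono_run g (~~ b) (p + r.+1) r.+1.
Proof.
move=> rp run gb k /andP[ge_k le_k].
suff: g k != b by move: (g k) (b) => [] [].
apply: contra gb => /eqP gk.
have h_run : mono_run h b p.+1 r.+1.
  move=> x /andP[ge_x le_x]; case: (ltnP x (p + r.+1)) => [lt_x | ge_x'].
    by apply: (maj_image_run gh _ _ run); lia.
  have -> : x = p + r.+1 by lia.
  apply: gh; first lia.
  rewrite (_ : p + r.+1 - r = p.+1); last by lia.
  rewrite (_ : (2 * r).+1 = r + r.+1); last by lia.
  rewrite wcountD (@wcount_mono_run g b p.+1 r); last by move=> y y_in; apply: run; lia.
  have k_counted : 0 < wcount g b k 1 by rewrite /wcount /= gk eqxx.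
  rewrite -[X in X < _]addn0 ltn_add2l (leq_trans k_counted) //.
  by apply: wcount_sub; lia.
apply/eqP; apply: (maj_image_run hg _ _ h_run); lia.
Qed.

Lemma run_step b p : r <= p -> mono_run g b p r.+1 ->
  mono_run g b p.+1 r.+1 \/ mono_run g (~~ b) (p + r.+1) r.+1.
Proof.
move=> rp run; have [gb | gb] := eqVneq (g (p + r.+1)) b; last by right; apply: run_flip.
left => k /andP[ge_k le_k]; case: (ltnP k (p + r.+1)) => [lt_k | ge_k'].
  by apply: run; lia.
by have -> : k = p + r.+1 by lia.
Qed.

Lemma runs_cover b p : r <= p -> mono_run g b p r.+1 ->
  forall x, p <= x -> exists q c, [/\ p <= q, q <= x <= q + r & mono_run g c q r.+1].
Proof.
move=> rp run; elim=> [|x IH] le_px.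
  by exists p, b; split => //; lia.
have [eq_px | lt_px] := eqVneq p x.+1; first by exists p, b; split => //; lia.
have [q [c [le_pq /andP[le_qx le_xq] run_q]]] := IH ltac:(lia).
have [le_xq' | gt_xq] := leqP x.+1 (q + r); first by exists q, c; split => //; lia.
have [run' | run'] := run_step (p := q) ltac:(lia) run_q.
  by exists q.+1, c; split => //; lia.
by exists (q + r.+1), (~~ c); split => //; lia.
Qed.

Lemma run_long_after b p y : r <= p -> mono_run g b p r.+1 -> p < y ->
  g y.-1 != g y -> mono_run g (g y) y r.+1.
Proof.
move=> rp run lt_py gy.
have [q [c [le_pq /andP[le_qy le_yq] run_q]]] := runs_cover rp run (ltnW lt_py).
have [<- | lt_qy] := eqVneq q y; first by rewrite (run_q q) //; lia.
by move: gy; rewrite (run_q y.-1) ?(run_q y) ?eqxx //; lia.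
Qed.

End TwoCycle.

Definition unroll (n : nat) (s : 'I_n.+1 -> bool) (x : nat) : bool := s (cell n x).

Lemma cellE n x : cell n x = x %% n.+1 :> nat.
Proof. by rewrite /cell inordK // ltn_pmod. Qed.

Lemma eq_cell n x y : x = y %[mod n.+1] -> cell n x = cell n y.
Proof. by rewrite /cell => ->. Qed.

Lemma wcellE n r x k : r <= x -> wcell r (cell n x) k = cell n (x - r + k).
Proof.
move=> rx; apply: eq_cell; rewrite cellE -addnA modnDml.
by rewrite -(modnMDl r (x - r + k)) mulnS; congr (_ %% _); lia.
Qed.

Lemma maj_unroll n r (s : 'I_n.+1 -> bool) : maj_image r (unroll s) (unroll (maj r s)).
Proof.
move=> x b rx majority; rewrite [LHS]/unroll /maj.
have -> : ones r s (cell n x) = wcount (unroll s) true (x - r) (2 * r).+1.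
  rewrite /wcount -sum_count_iota; apply: eq_bigr => k _.
  by rewrite wcellE // /unroll; case: (s _).
have -> : zeros r s (cell n x) = wcount (unroll s) false (x - r) (2 * r).+1.
  rewrite /wcount -sum_count_iota; apply: eq_bigr => k _.
  by rewrite wcellE // /unroll; case: (s _).
have := wcount_total (unroll s) (x - r) (2 * r).+1.
by case: b majority => majority total; apply/eqP; rewrite ?eqbF_neg ?eqb_id ?negbK; lia.
Qed.

Lemma unroll_block n (s : 'I_n.+1 -> bool) b i j x :
  is_block s b i j -> x = i %[mod n.+1] ->
  [/\ mono_run (unroll s) b x (ilen i j), unroll s (x + ilen i j) = ~~ b
    & 0 < x -> unroll s x.-1 = ~~ b].
Proof.
move=> [inside [left right]] xi; split.
- move=> k /andP[ge_k lt_k]; rewrite /unroll -(inside (k - x)); last by lia.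
  by congr s; apply: eq_cell; rewrite -{1}(subnKC ge_k) -modnDml xi modnDml.
- rewrite /unroll -right; congr s; apply: eq_cell.
  rewrite -modnDml xi modnDml /ilen addnS -addn1 -modnDml modnDmr modnDml.
  rewrite subnKC; last by have := ltn_ord i; lia.
  by rewrite addnAC modnDr.
- move=> x_gt0; rewrite /unroll -left; congr s; apply: eq_cell.
  rewrite -[LHS]modnDr addnS -addSn prednK //.
  by rewrite -modnDml xi modnDml.
Qed.

Lemma long_block_excludes_short n r (s : 'I_n.+1 -> bool) b i j b' i' j' :
  temporally_periodic r s -> is_block s b i j -> r < ilen i j ->
  is_block s b' i' j' -> ilen i' j' <= r -> False.
Proof.
move=> periodic long long_len short short_len.
have hg : maj_image r (unroll (maj r s)) (unroll s).
  by move=> x c rx /(@maj_unroll n r (maj r s) x c rx); rewrite /unroll periodic.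
set p := r * n.+1 + i; set y := r.+1 * n.+1 + i'.
have [run_long _ _] := unroll_block (x := p) long (modnMDl _ _ _).
have run_p : mono_run (unroll s) b p r.+1 by move=> k k_in; apply: run_long; lia.
have [run_short right left] := unroll_block (x := y) short (modnMDl _ _ _).
have y_start : unroll s y = b' by apply: run_short; rewrite leqnn addnS ltnS leq_addr.
have r_le_p : r <= p by rewrite /p mulnS; lia.
have p_lt_y : p < y by have := ltn_ord i; rewrite /p /y mulSn; lia.
have y_break : unroll s y.-1 != unroll s y.
  by rewrite left ?y_start; [case: (b') | lia].
have end_in_run : y <= y + ilen i' j' < y + r.+1 by rewrite leq_addr ltn_add2l ltnS.
have := run_long_after (@maj_unroll n r s) hg r_le_p run_p p_lt_y y_break end_in_run.
by rewrite right y_start; case: (b').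
Qed.

Theorem claim6 (r n : nat) (s : 'I_n.+1 -> bool) :
  1 <= r -> temporally_periodic r s ->
  (forall (b : bool) (i j : 'I_n.+1), is_block s b i j -> ilen i j <= r) \/
  (forall (b : bool) (i j : 'I_n.+1), is_block s b i j -> r < ilen i j).
Proof.
move=> _ periodic.
have [[b [i [j [long long_len]]]] | no_long] :=
  classic (exists b i j, is_block s b i j /\ r < ilen i j).
- right => b' i' j' short; rewrite ltnNge; apply/negP => short_len.
  exact: (long_block_excludes_short periodic long long_len short short_len).
- left => b i j block; rewrite leqNgt; apply/negP => long_len.
  by apply: no_long; exists b, i, j.
Qed.
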